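(* Let $H \in \mathrm{Herm}(\mathcal{H})$, $\mathcal{A}$ an ancillary Hilbert space and $H' \in \mathrm{Herm}(\mathcal{H}\otimes\mathcal{A})$. Suppose $(H',\mathcal{A})$ is an $(\eta,\epsilon)$-gadget for $H$ with $U$, $P$ and $P' = U(\mathbb{I}\otimes P)U^\dagger$ as in the definition, where $U$ is the direct rotation between $\mathbb{I}\otimes P$ and $P'$. Assume $\|H'\| \le J'$ and $\|(\mathbb{I}\otimes P)H'(\mathbb{I}\otimes P^\perp)\| \le J_O'$. Then $$\|(\mathbb{I}\otimes P)H'(\mathbb{I}\otimes P)\| \le \|H\| + O(\epsilon + \eta J_O' + \eta^2 J').$$
   Context: $\|\cdot\|$ is the operator norm, $P^\perp = \mathbb{I} - P$. $(H',\mathcal{A})$ is an $(\eta,\epsilon)$-gadget for $H$ if there exist an orthogonal projector $P\neq 0$ on $\mathcal{A}$ and a unitary $U$ on $\mathcal{H}\otimes\mathcal{A}$ with $\|U - \mathbb{I}\| \le \eta$ and $\|P'H'P' - U(H\otimes P)U^\dagger\| \le \epsilon$, where $P' = U(\mathbb{I}\otimes P)U^\dagger$. Direct rotation: for orthogonal projectors $P_1, P_2$ of equal rank with $\|P_1 - P_2\| < 1$, let $R_1 = \mathbb{I} - 2P_1$, $R_2 = \mathbb{I} - 2P_2$; the direct rotation from $P_1$ to $P_2$ is $\sqrt{R_2R_1}$, with the square root taken with branch cut along the negative real axis and $\sqrt{1} = 1$. *)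

(* complex numbers R[i] over an abstract real field R : realType
   (mathcomp-real-closed), finite-dimensional Hilbert spaces as coordinate spaces. *)
From HB Require Import structures.
From mathcomp Require Import all_boot all_order all_algebra.
From mathcomp Require Import complex mxtens.
From mathcomp Require Import classical_sets reals.
Set Implicit Arguments. Unset Strict Implicit. Unset Printing Implicit Defensive.
Import Order.TTheory GRing.Theory Num.Theory.
Local Open Scope ring_scope.
Local Open Scope classical_set_scope.

Section Defs.
Variable R : realType.
Local Notation C := (R[i]).

Definition adj {m n : nat} (A : 'M[C]_(m, n)) : 'M[C]_(n, m) :=
  \matrix_(i, j) conjc (A j i).

Definition vnorm {n : nat} (v : 'cV[C]_n) : R :=
  Num.sqrt (\sum_i (Normc.normc (v i 0)) ^+ 2).

Definition opnorm {m n : nat} (A : 'M[C]_(m, n)) : R :=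
  sup [set x : R | exists v : 'cV[C]_n, vnorm v <= 1 /\ x = vnorm (A *m v)].

Definition herm_mx {n : nat} (A : 'M[C]_n) : Prop := adj A = A.
Definition unitary_mx {n : nat} (U : 'M[C]_n) : Prop := U *m adj U = 1%:M.
Definition orth_proj_mx {n : nat} (P : 'M[C]_n) : Prop :=
  adj P = P /\ P *m P = P.

(* principal square root (branch cut along the negative real axis, sqrt 1 = 1):
   w is the principal square root of z *)
Definition is_psqrt (z w : C) : Prop :=
  w * w = z /\ (0 < Re w \/ (Re w = 0 /\ 0 <= Im w)).

(* Direct rotation from P1 to P2: U = sqrt(R2 R1), R_k = I - 2 P_k, where
   P1, P2 are orthogonal projectors of equal rank with ||P1 - P2|| < 1.
   The principal square root of the unitary_mx (hence normal) matrix R2 R1 is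
   computed via a unitary_mx diagonalisation. *)
Definition direct_rotation {n : nat} (P1 P2 U : 'M[C]_n) : Prop :=
  orth_proj_mx P1 /\ orth_proj_mx P2 /\ \rank P1 = \rank P2 /\
  opnorm (P1 - P2) < 1 /\
  exists (V : 'M[C]_n) (d w : 'rV[C]_n),
    unitary_mx V /\
    (1%:M - 2%:R *: P2) *m (1%:M - 2%:R *: P1) = V *m diag_mx d *m adj V /\
    (forall i, is_psqrt (d 0 i) (w 0 i)) /\
    U = V *m diag_mx w *m adj V.

End Defs.

From HB Require Import structures.
From mathcomp Require Import all_boot all_order all_algebra.
From mathcomp Require Import complex mxtens.
From mathcomp Require Import classical_sets reals.
From mathcomp Require Import ring lra.
Set Implicit Arguments. Unset Strict Implicit. Unset Printing Implicit Defensive.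
Import Order.TTheory GRing.Theory Num.Theory.
Local Open Scope ring_scope.

(* Write Q = I (x) P and U = 1 + D, so that ||D|| <= eta.  Because U is the direct
   rotation from Q, the reflection R = 1 - 2Q conjugates U into its adjoint, R U R = U^*:
   in an eigenbasis of the product of reflections, R intertwines each eigenvalue with its
   conjugate, no eigenvalue equals -1 since ||Q - P'|| < 1, and away from the branch cut
   principal square roots commute with conjugation.  Compressing by Q gives
   Q D Q = Q D^* Q, so compressing the unitarity relation D + D^* + D^* D = 0 yields
   ||Q D Q|| <= eta^2 / 2.  Finally Q U^* H' U Q = U^* (P' H' P') U has norm at most
   ||H|| + eps, and expanding it in D, splitting the first-order terms along
   1 = Q + (1 - Q), shows that Q H' Q differs from it by at most
   2 eta J_O' + 2 eta^2 J'; hence c = 2 works. *)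

Local Notation RE := complex.Re.
Local Notation IM := complex.Im.
Local Notation normc := Normc.normc.

Section ComplexCoordinates.
Variable R : rcfType.
Local Notation C := R[i].

Lemma ReD (x y : C) : RE (x + y) = RE x + RE y.
Proof. by case: x => a b; case: y. Qed.

Lemma ImD (x y : C) : IM (x + y) = IM x + IM y.
Proof. by case: x => a b; case: y. Qed.

Lemma Re_sum (I : finType) (F : I -> C) : RE (\sum_i F i) = \sum_i RE (F i).
Proof. exact: (big_morph (@complex.Re R) ReD (erefl _)). Qed.

Lemma normc_sqr (z : C) : normc z ^+ 2 = RE z ^+ 2 + IM z ^+ 2.
Proof. by case: z => a b /=; rewrite sqr_sqrtr // addr_ge0 ?sqr_ge0. Qed.

Lemma normc_ge0 (z : C) : 0 <= normc z.
Proof. by case: z => a b; apply: sqrtr_ge0. Qed.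

Lemma normc_real (a : R) : normc a%:C%C = `|a|.
Proof. by rewrite /Normc.normc /= expr0n /= addr0 sqrtr_sqr. Qed.

Lemma conjc_mulr_self (z : C) : conjc z * z = (RE z ^+ 2 + IM z ^+ 2)%:C%C.
Proof. by case: z => a b; congr Complex => /=; ring. Qed.

Lemma Re_conjc_mulr (x y : C) : RE (conjc x * y) = RE x * RE y + IM x * IM y.
Proof. by case: x => a b; case: y => c d /=; ring. Qed.

End ComplexCoordinates.

Section PairedCauchySchwarz.
Variables (R : rcfType) (I : finType).
Implicit Types a b c d : I -> R.

Lemma sum_sqr_pair_eq0 a b :
  \sum_i (a i ^+ 2 + b i ^+ 2) = 0 -> forall i, a i = 0 /\ b i = 0.
Proof.
move=> /eqP; rewrite psumr_eq0 => [/allP sum0 i|i _]; last first.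
  by rewrite addr_ge0 ?sqr_ge0.
have /sum0 := mem_index_enum i; rewrite implyTb paddr_eq0 ?sqr_ge0 //.
by rewrite !sqrf_eq0 => /andP[/eqP -> /eqP ->].
Qed.

Lemma sum_pair_mul0 a b c d :
  \sum_i (a i ^+ 2 + b i ^+ 2) = 0 -> \sum_i (a i * c i + b i * d i) = 0.
Proof.
move/sum_sqr_pair_eq0 => ab0; rewrite big1 // => i _.
by have [-> ->] := ab0 i; rewrite !mul0r addr0.
Qed.

Lemma cauchy_schwarz_pair a b c d :
  \sum_i (a i * c i + b i * d i) <=
  Num.sqrt (\sum_i (a i ^+ 2 + b i ^+ 2)) * Num.sqrt (\sum_i (c i ^+ 2 + d i ^+ 2)).
Proof.
set S := \sum_i _; set SA := \sum_i (a i ^+ 2 + _); set SB := \sum_i (c i ^+ 2 + _).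
have SA_ge0 : 0 <= SA by apply: sumr_ge0 => i _; rewrite addr_ge0 ?sqr_ge0.
have SB_ge0 : 0 <= SB by apply: sumr_ge0 => i _; rewrite addr_ge0 ?sqr_ge0.
set A := Num.sqrt SA; set B := Num.sqrt SB.
have [AA BB] : A ^+ 2 = SA /\ B ^+ 2 = SB by rewrite !sqr_sqrtr.
have [A0|A_neq0] := eqVneq A 0.
  have SA0 : SA = 0 by rewrite -AA A0 expr0n.
  by rewrite /S (sum_pair_mul0 _ _ SA0) A0 mul0r.
have [B0|B_neq0] := eqVneq B 0.
  rewrite /S (eq_bigr (fun i => c i * a i + d i * b i)) => [|i _]; last first.
    by rewrite mulrC [b i * _]mulrC.
  have SB0 : SB = 0 by rewrite -BB B0 expr0n.
  by rewrite (sum_pair_mul0 _ _ SB0) B0 mulr0.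
have AB_gt0 : 0 < A * B by rewrite mulr_gt0 // lt_def ?A_neq0 ?B_neq0 sqrtr_ge0.
(* AM-GM for the rescaled vectors [B (a, b)] and [A (c, d)] *)
have amgm : 2 * A * B * S <= B ^+ 2 * SA + A ^+ 2 * SB.
  rewrite /S /SA /SB !mulr_sumr -big_split /=; apply: ler_sum => i _.
  have := sqr_ge0 (B * a i - A * c i); have := sqr_ge0 (B * b i - A * d i).
  nra.
rewrite -AA -BB in amgm; rewrite -(ler_pM2l AB_gt0); nra.
Qed.

End PairedCauchySchwarz.

Section Adjoint.
Variable R : realType.
Local Notation C := R[i].

Lemma adjE m n (A : 'M[C]_(m, n)) i j : adj A i j = conjc (A j i).
Proof. by rewrite mxE. Qed.

Lemma adjK m n (A : 'M[C]_(m, n)) : adj (adj A) = A.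
Proof. by apply/matrixP => i j; rewrite !adjE conjcK. Qed.

Lemma adjM m n p (A : 'M[C]_(m, n)) (B : 'M[C]_(n, p)) :
  adj (A *m B) = adj B *m adj A.
Proof.
apply/matrixP => i j; rewrite adjE !mxE rmorph_sum; apply: eq_bigr => k _.
by rewrite !adjE rmorphM mulrC.
Qed.

Lemma adjM3 m n p q (A : 'M[C]_(m, n)) (X : 'M[C]_(n, p)) (B : 'M[C]_(p, q)) :
  adj (A *m X *m B) = adj B *m adj X *m adj A.
Proof. by rewrite !adjM mulmxA. Qed.

Lemma adjD m n (A B : 'M[C]_(m, n)) : adj (A + B) = adj A + adj B.
Proof. by apply/matrixP => i j; rewrite !mxE rmorphD. Qed.

Lemma adjN m n (A : 'M[C]_(m, n)) : adj (- A) = - adj A.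
Proof. by apply/matrixP => i j; rewrite !mxE rmorphN. Qed.

Lemma adjB m n (A B : 'M[C]_(m, n)) : adj (A - B) = adj A - adj B.
Proof. by rewrite adjD adjN. Qed.

Lemma adj_scalemx m n (c : C) (A : 'M[C]_(m, n)) : adj (c *: A) = conjc c *: adj A.
Proof. by apply/matrixP => i j; rewrite !mxE rmorphM. Qed.

Lemma adj_idmx n : adj (1%:M : 'M[C]_n) = 1%:M.
Proof. by apply/matrixP => i j; rewrite adjE !mxE eq_sym conjc_nat. Qed.

Lemma adj_tensmx m n p q (A : 'M[C]_(m, n)) (B : 'M[C]_(p, q)) :
  adj (A *t B) = adj A *t adj B.
Proof. by apply/matrixP => i j; rewrite !mxE rmorphM. Qed.

Lemma adj_diag_mx n (d : 'rV[C]_n) : adj (diag_mx d) = diag_mx (map_mx conjc d).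
Proof.
apply/matrixP => i j; rewrite adjE !mxE rmorphMn eq_sym.
by case: eqVneq => [->|_] //; rewrite !mulr0n.
Qed.

Lemma orth_proj_mx_compl n (P : 'M[C]_n) :
  orth_proj_mx P -> orth_proj_mx (1%:M - P).
Proof.
case=> Padj Pidem; split; first by rewrite adjB adj_idmx Padj.
by rewrite mulmxBl mul1mx mulmxBr mulmx1 Pidem subrr subr0.
Qed.

End Adjoint.

Section VectorNorm.
Variable R : realType.
Local Notation C := R[i].
Implicit Types n : nat.

Definition sqnorm n (v : 'cV[C]_n) : R :=
  \sum_i (RE (v i 0) ^+ 2 + IM (v i 0) ^+ 2).

Lemma sqnorm_ge0 n (v : 'cV[C]_n) : 0 <= sqnorm v.
Proof. by apply: sumr_ge0 => i _; rewrite addr_ge0 ?sqr_ge0. Qed.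

Lemma vnormE n (v : 'cV[C]_n) : vnorm v = Num.sqrt (sqnorm v).
Proof. by congr Num.sqrt; apply: eq_bigr => i _; rewrite normc_sqr. Qed.

Lemma vnorm_ge0 n (v : 'cV[C]_n) : 0 <= vnorm v.
Proof. by rewrite vnormE sqrtr_ge0. Qed.

Lemma vnorm_sqr n (v : 'cV[C]_n) : vnorm v ^+ 2 = sqnorm v.
Proof. by rewrite vnormE sqr_sqrtr // sqnorm_ge0. Qed.

Lemma sqnorm_adj n (v : 'cV[C]_n) : (adj v *m v) 0 0 = (sqnorm v)%:C%C.
Proof.
rewrite mxE /sqnorm rmorph_sum; apply: eq_bigr => i _.
by rewrite adjE conjc_mulr_self.
Qed.

Lemma Re_sqnorm n (v : 'cV[C]_n) : RE ((adj v *m v) 0 0) = sqnorm v.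
Proof. by rewrite sqnorm_adj. Qed.

Lemma Re_adj_mulmx n (x y : 'cV[C]_n) :
  RE ((adj x *m y) 0 0) = \sum_i (RE (x i 0) * RE (y i 0) + IM (x i 0) * IM (y i 0)).
Proof. by rewrite mxE Re_sum; apply: eq_bigr => i _; rewrite adjE Re_conjc_mulr. Qed.

Lemma Re_adj_mulmx_le n (x y : 'cV[C]_n) : RE ((adj x *m y) 0 0) <= vnorm x * vnorm y.
Proof. by rewrite Re_adj_mulmx !vnormE; apply: cauchy_schwarz_pair. Qed.

Lemma vnorm_eq0 n (v : 'cV[C]_n) : vnorm v = 0 -> v = 0.
Proof.
move=> v0; have /sum_sqr_pair_eq0 entry0 : sqnorm v = 0 by rewrite -vnorm_sqr v0 expr0n.
apply/matrixP => i j; rewrite [j]ord1 mxE.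
by case: (entry0 i); case: (v i 0) => a b /= -> ->.
Qed.

Lemma vnorm0 n : vnorm (0 : 'cV[C]_n) = 0.
Proof. by rewrite vnormE /sqnorm big1 ?sqrtr0 // => i _; rewrite mxE expr0n addr0. Qed.

Lemma vnorm_adj_eq n p (x : 'cV[C]_n) (y : 'cV[C]_p) :
  (adj x *m x) 0 0 = (adj y *m y) 0 0 -> vnorm x = vnorm y.
Proof. by rewrite !sqnorm_adj => /complexI; rewrite !vnormE => ->. Qed.

Lemma vnormN n (x : 'cV[C]_n) : vnorm (- x) = vnorm x.
Proof. by apply: vnorm_adj_eq; rewrite adjN mulNmx mulmxN opprK. Qed.

Lemma vnormZ n (c : C) (x : 'cV[C]_n) : vnorm (c *: x) = normc c * vnorm x.
Proof.
have sqnormZ : sqnorm (c *: x) = normc c ^+ 2 * sqnorm x.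
  apply: (@complexI R); rewrite -sqnorm_adj adj_scalemx -scalemxAl -scalemxAr scalerA.
  by rewrite [LHS]mxE conjc_mulr_self -normc_sqr sqnorm_adj -rmorphM.
by rewrite !vnormE sqnormZ sqrtrM ?sqr_ge0 // sqrtr_sqr ger0_norm ?normc_ge0.
Qed.

Lemma sqnormD n (x y : 'cV[C]_n) :
  sqnorm (x + y) = sqnorm x + sqnorm y + 2 * RE ((adj x *m y) 0 0).
Proof.
rewrite Re_adj_mulmx /sqnorm mulr_sumr -!big_split; apply: eq_bigr => i _ /=.
by rewrite mxE ReD ImD; ring.
Qed.

Lemma vnormD n (x y : 'cV[C]_n) : vnorm (x + y) <= vnorm x + vnorm y.
Proof.
rewrite -ler_sqr ?nnegrE ?addr_ge0 ?vnorm_ge0 // !vnorm_sqr sqnormD.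
rewrite sqrrD !vnorm_sqr addrAC lerD2r lerD2l -[leRHS]mulr_natl ler_pM2l //.
exact: Re_adj_mulmx_le.
Qed.

Lemma vnorm_sum n (I : finType) (F : I -> 'cV[C]_n) :
  vnorm (\sum_i F i) <= \sum_i vnorm (F i).
Proof.
apply: (big_ind2 (fun (x : 'cV[C]_n) (a : R) => vnorm x <= a)) => //.
  by rewrite vnorm0.
by move=> x a y b xa yb; apply: le_trans (vnormD x y) (lerD xa yb).
Qed.

Lemma normc_le_vnorm n (v : 'cV[C]_n) i : normc (v i 0) <= vnorm v.
Proof.
rewrite vnormE /Normc.normc; case E: (v i 0) => [a b].
rewrite ler_sqrt ?sqnorm_ge0 // /sqnorm (bigD1 i) //= E lerDl.
by apply: sumr_ge0 => j _; rewrite addr_ge0 ?sqr_ge0.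
Qed.

End VectorNorm.

Lemma le_of_sqr_le_mul (R : realDomainType) (t a : R) :
  0 <= t -> 0 <= a -> t ^+ 2 <= a * t -> t <= a.
Proof. by move=> *; nra. Qed.

Section OperatorNorm.
Variable R : realType.
Local Notation C := R[i].
Implicit Types m n p : nat.

Lemma mulmx_sum_col m n (A : 'M[C]_(m, n)) (v : 'cV[C]_n) :
  A *m v = \sum_j v j 0 *: col j A.
Proof.
apply/matrixP => i k; rewrite [k]ord1 !mxE summxE; apply: eq_bigr => j _.
by rewrite !mxE mulrC.
Qed.

Lemma has_sup_opnorm m n (A : 'M[C]_(m, n)) :
  has_sup [set x : R | exists v : 'cV[C]_n, vnorm v <= 1 /\ x = vnorm (A *m v)]%classic.
Proof.
split; first by exists 0; exists 0; rewrite mulmx0 !vnorm0 ler01; split.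
exists (\sum_j vnorm (col j A)); move=> _ [v [v_le1 ->]].
rewrite mulmx_sum_col; apply: le_trans (vnorm_sum _) _; apply: ler_sum => j _.
by rewrite vnormZ ler_piMl ?vnorm_ge0 // (le_trans (normc_le_vnorm _ _) v_le1).
Qed.

Lemma vnorm_mulmx_le1 m n (A : 'M[C]_(m, n)) v :
  vnorm v <= 1 -> vnorm (A *m v) <= opnorm A.
Proof. by move=> v_le1; apply: (sup_upper_bound (has_sup_opnorm A)); exists v. Qed.

Lemma opnorm_ge0 m n (A : 'M[C]_(m, n)) : 0 <= opnorm A.
Proof. by have := @vnorm_mulmx_le1 _ _ A 0; rewrite mulmx0 !vnorm0; apply; apply: ler01. Qed.

Lemma vnorm_mulmx_le m n (A : 'M[C]_(m, n)) v : vnorm (A *m v) <= opnorm A * vnorm v.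
Proof.
have [/vnorm_eq0 ->|v_neq0] := eqVneq (vnorm v) 0; first by rewrite mulmx0 !vnorm0 mulr0.
have v_gt0 : 0 < vnorm v by rewrite lt_def v_neq0 vnorm_ge0.
have := @vnorm_mulmx_le1 _ _ A ((vnorm v)^-1%:C%C *: v).
rewrite -scalemxAr !vnormZ normc_real ger0_norm ?invr_ge0 ?vnorm_ge0 // mulVf //.
by move/(_ (lexx 1)); rewrite -(ler_pM2l v_gt0) mulrA mulfV // mul1r mulrC.
Qed.

Lemma opnorm_le m n (A : 'M[C]_(m, n)) (k : R) :
  0 <= k -> (forall v, vnorm (A *m v) <= k * vnorm v) -> opnorm A <= k.
Proof.
move=> k_ge0 Ak; apply: ge_sup; first by case: (has_sup_opnorm A).
by move=> _ [v [v_le1 ->]]; apply: le_trans (Ak v) _; apply: ler_piMr.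
Qed.

Lemma opnormD m n (A B : 'M[C]_(m, n)) : opnorm (A + B) <= opnorm A + opnorm B.
Proof.
apply: opnorm_le => [|v]; first by rewrite addr_ge0 ?opnorm_ge0.
rewrite mulmxDl mulrDl; apply: le_trans (vnormD _ _) _.
by rewrite lerD ?vnorm_mulmx_le.
Qed.

Lemma opnormN m n (A : 'M[C]_(m, n)) : opnorm (- A) = opnorm A.
Proof.
have opnormN_le (B : 'M[C]_(m, n)) : opnorm (- B) <= opnorm B.
  apply: opnorm_le => [|v]; first exact: opnorm_ge0.
  by rewrite mulNmx vnormN vnorm_mulmx_le.
apply: le_anti; apply/andP; split; first exact: opnormN_le.
by rewrite -{1}(opprK A) opnormN_le.
Qed.

Lemma opnormB m n (A B : 'M[C]_(m, n)) : opnorm (A - B) <= opnorm A + opnorm B.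
Proof. by rewrite -(opnormN B) opnormD. Qed.

Lemma opnormM m n p (A : 'M[C]_(m, n)) (B : 'M[C]_(n, p)) :
  opnorm (A *m B) <= opnorm A * opnorm B.
Proof.
apply: opnorm_le => [|v]; first by rewrite mulr_ge0 ?opnorm_ge0.
rewrite -mulmxA -mulrA; apply: le_trans (vnorm_mulmx_le _ _) _.
by rewrite ler_wpM2l ?opnorm_ge0 ?vnorm_mulmx_le.
Qed.

Lemma opnormM_le m n p (A : 'M[C]_(m, n)) (B : 'M[C]_(n, p)) a b :
  opnorm A <= a -> opnorm B <= b -> opnorm (A *m B) <= a * b.
Proof.
by move=> Aa Bb; apply: le_trans (opnormM _ _) (ler_pM _ _ Aa Bb); rewrite opnorm_ge0.
Qed.

Lemma opnormZ_le m n (c : C) (A : 'M[C]_(m, n)) : opnorm (c *: A) <= normc c * opnorm A.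
Proof.
apply: opnorm_le => [|v]; first by rewrite mulr_ge0 ?normc_ge0 ?opnorm_ge0.
by rewrite -scalemxAl vnormZ -mulrA ler_wpM2l ?normc_ge0 ?vnorm_mulmx_le.
Qed.

Lemma opnorm_adj_le m n (A : 'M[C]_(m, n)) : opnorm (adj A) <= opnorm A.
Proof.
apply: opnorm_le => [|v]; first exact: opnorm_ge0.
apply: le_of_sqr_le_mul; rewrite ?mulr_ge0 ?opnorm_ge0 ?vnorm_ge0 //.
rewrite vnorm_sqr -Re_sqnorm adjM adjK -mulmxA -mulrA mulrCA.
by apply: le_trans (Re_adj_mulmx_le _ _) _; rewrite ler_wpM2l ?vnorm_ge0 ?vnorm_mulmx_le.
Qed.

Lemma opnorm_isometry_le1 n (U : 'M[C]_n) : adj U *m U = 1%:M -> opnorm U <= 1.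
Proof.
move=> UU; apply: opnorm_le => [|v]; first exact: ler01.
rewrite mul1r le_eqVlt (vnorm_adj_eq (y := v)) ?eqxx //.
by rewrite adjM mulmxA -(mulmxA (adj v)) UU mulmx1.
Qed.

Lemma opnorm_proj_le1 n (P : 'M[C]_n) : orth_proj_mx P -> opnorm P <= 1.
Proof.
move=> [Padj Pidem]; apply: opnorm_le => [|v]; first exact: ler01.
rewrite mul1r; apply: le_of_sqr_le_mul; rewrite ?vnorm_ge0 //.
rewrite vnorm_sqr -Re_sqnorm adjM Padj mulmxA -(mulmxA (adj v)) Pidem -mulmxA.
exact: Re_adj_mulmx_le.
Qed.

Lemma opnorm_proj_mulmx_le m n (P : 'M[C]_m) (A : 'M[C]_(m, n)) :
  orth_proj_mx P -> opnorm (P *m A) <= opnorm A.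
Proof. by move=> /opnorm_proj_le1 P_le1; rewrite -[leRHS]mul1r opnormM_le. Qed.

Lemma opnorm_mulmx_proj_le m n (A : 'M[C]_(m, n)) (P : 'M[C]_n) :
  orth_proj_mx P -> opnorm (A *m P) <= opnorm A.
Proof. by move=> /opnorm_proj_le1 P_le1; rewrite -[leRHS]mulr1 opnormM_le. Qed.

Lemma opnorm_unitary_conj_le n (U A : 'M[C]_n) :
  unitary_mx U -> opnorm (U *m A *m adj U) <= opnorm A.
Proof.
move=> U_unitary; have U_le1 := opnorm_isometry_le1 (mulmx1C U_unitary).
have adjU_le1 : opnorm (adj U) <= 1 by apply: opnorm_isometry_le1; rewrite adjK.
by have := opnormM_le (opnormM_le U_le1 (lexx (opnorm A))) adjU_le1; rewrite mul1r mulr1.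
Qed.

Lemma opnorm_ge1 m n (A : 'M[C]_(m, n)) (x : 'cV[C]_n) :
  x != 0 -> vnorm (A *m x) = vnorm x -> 1 <= opnorm A.
Proof.
move=> x_neq0 Ax; have := vnorm_mulmx_le A x; rewrite Ax.
have x_gt0 : 0 < vnorm x.
  by rewrite lt_def vnorm_ge0 andbT; apply: contra_neq x_neq0 => /vnorm_eq0.
by rewrite -{1}[vnorm x]mul1r ler_pM2r.
Qed.

End OperatorNorm.

Section TensorNorm.
Variable R : realType.
Local Notation C := R[i].

Lemma sum_mxtens_index (V : nmodType) n m (F : 'I_(n * m) -> V) :
  \sum_l F l = \sum_i \sum_k F (mxtens_index (i, k)).
Proof.
rewrite (reindex (@mxtens_index n m)) /=; last first.
  by exists (@mxtens_unindex n m) => x _; rewrite ?mxtens_indexK ?mxtens_unindexK.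
by rewrite pair_big /=; apply: eq_bigr => -[i k].
Qed.

Definition mxtens_slice n m (v : 'cV[C]_(n * m)) (k : 'I_m) : 'cV[C]_n :=
  \col_i v (mxtens_index (i, k)) 0.

Lemma sqnorm_mxtens_slice n m (v : 'cV[C]_(n * m)) :
  sqnorm v = \sum_k sqnorm (mxtens_slice v k).
Proof.
rewrite /sqnorm sum_mxtens_index exchange_big; apply: eq_bigr => k _.
by apply: eq_bigr => i _; rewrite !mxE.
Qed.

Lemma mxtens_slice_tensmx1 n m (H : 'M[C]_n) (v : 'cV[C]_(n * m)) k :
  mxtens_slice ((H *t (1%:M : 'M[C]_m)) *m v) k = H *m mxtens_slice v k.
Proof.
apply/matrixP => i z; rewrite [z]ord1 !mxE sum_mxtens_index; apply: eq_bigr => j _.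
rewrite (bigD1 k) //= big1 => [|k' k'_neq]; last first.
  by rewrite tensmxE mxE eq_sym (negbTE k'_neq) mulr0 mul0r.
by rewrite tensmxE !mxE eqxx mulr1 addr0.
Qed.

Lemma opnorm_tensmx1_le n m (H : 'M[C]_n) : opnorm (H *t (1%:M : 'M[C]_m)) <= opnorm H.
Proof.
apply: opnorm_le => [|v]; first exact: opnorm_ge0.
rewrite -ler_sqr ?nnegrE ?mulr_ge0 ?opnorm_ge0 ?vnorm_ge0 //.
rewrite exprMn !vnorm_sqr !sqnorm_mxtens_slice mulr_sumr; apply: ler_sum => k _.
rewrite mxtens_slice_tensmx1 -!vnorm_sqr -exprMn.
by rewrite ler_sqr ?nnegrE ?mulr_ge0 ?opnorm_ge0 ?vnorm_ge0 ?vnorm_mulmx_le.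
Qed.

Lemma tensmx11 n m : (1%:M : 'M[C]_n) *t (1%:M : 'M[C]_m) = 1%:M.
Proof.
apply/matrixP => x y.
case: (mxtens_indexP x) => i k; case: (mxtens_indexP y) => j l.
rewrite tensmxE !mxE (inj_eq (can_inj (@mxtens_indexK n m))) xpair_eqE.
by case: eqP; case: eqP; rewrite ?mulr1 ?mulr0.
Qed.

Lemma tensmxBr n m p q (A : 'M[C]_(n, m)) (B B' : 'M[C]_(p, q)) :
  A *t (B - B') = A *t B - A *t B'.
Proof. by apply/matrixP => x y; rewrite !mxE mulrBr. Qed.

Lemma orth_proj_mx_tens1 n m (P : 'M[C]_m) :
  orth_proj_mx P -> orth_proj_mx ((1%:M : 'M[C]_n) *t P).
Proof.
case=> Padj Pidem; split; first by rewrite adj_tensmx adj_idmx Padj.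
by rewrite tensmx_mul mulmx1 Pidem.
Qed.

Lemma opnorm_tensmx_proj_le n m (H : 'M[C]_n) (P : 'M[C]_m) :
  orth_proj_mx P -> opnorm (H *t P) <= opnorm H.
Proof.
move=> Pproj; rewrite tensmx_decr -[opnorm H]mulr1.
apply: opnormM_le; first exact: opnorm_tensmx1_le.
exact: opnorm_proj_le1 (orth_proj_mx_tens1 _ Pproj).
Qed.

End TensorNorm.

Section PrincipalSqrt.
Variable R : realType.
Local Notation C := R[i].

Lemma is_psqrt_coord (z w : C) : is_psqrt z w ->
  w * w = z /\ (0 < RE w \/ (RE w = 0 /\ 0 <= IM w)).
Proof.
rewrite /is_psqrt -complexRe -complexIm -[0]/(0%:C)%C ltcR lecR.
by case=> -> [?|[/complexI ? ?]]; split=> //; [left | right].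
Qed.

(* Off the branch cut the principal square root commutes with conjugation; on the
   unit circle the only point of the cut is [-1]. *)
Lemma psqrt_conjc (z w w' : C) : conjc z * z = 1 -> z != -1 ->
  is_psqrt z w -> is_psqrt (conjc z) w' -> w' = conjc w.
Proof.
move=> z_unit z_neqN1 /is_psqrt_coord[wwz w_half] /is_psqrt_coord[ww'z w'_half].
have : (w' - conjc w) * (w' + conjc w) = 0.
  by rewrite mulrDr !mulrBl ww'z -rmorphM wwz [conjc w * w']mulrC addrA subrK subrr.
move/eqP; rewrite mulf_eq0 subr_eq0 addr_eq0 => /orP[/eqP //|/eqP w'E]; exfalso.
move: z_neqN1 z_unit w_half w'_half; rewrite w'E -wwz {wwz ww'z w'E}.
case: w => a b /= z_neqN1 z_unit w_half w'_half.
have a0 : a = 0 by case: w_half => [|[]]; case: w'_half => [|[]] /=; lra.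
move: z_neqN1 z_unit; rewrite a0; simpc => + /eqP.
rewrite !eq_complex /= => + /andP[/eqP bb _].
have -> : b * b = 1 by nra.
by rewrite !eqxx.
Qed.

End PrincipalSqrt.

Section Conjugation.
Variables (T : pzRingType) (n : nat).
Implicit Types V W X Y : 'M[T]_n.

Lemma conj_mulmx V W X Y : W *m V = 1%:M ->
  (V *m X *m W) *m (V *m Y *m W) = V *m (X *m Y) *m W.
Proof. by move=> WV; rewrite !mulmxA -(mulmxA _ W) WV mulmx1. Qed.

Lemma conj_mulmxK V W X : W *m V = 1%:M -> W *m (V *m X *m W) *m V = X.
Proof. by move=> WV; rewrite !mulmxA WV mul1mx -mulmxA WV mulmx1. Qed.

End Conjugation.

Section DirectRotation.
Variable R : realType.
Local Notation C := R[i].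
Local Notation refl P := (1%:M - 2%:R *: P).

Lemma refl_adj n (P : 'M[C]_n) : adj P = P -> adj (refl P) = refl P.
Proof. by move=> Padj; rewrite adjB adj_idmx adj_scalemx Padj conjc_nat. Qed.

Lemma proj_mulmx_refl n (P : 'M[C]_n) : P *m P = P -> P *m refl P = - P.
Proof.
move=> Pidem; rewrite mulmxBr mulmx1 -scalemxAr Pidem scaler_nat mulr2n.
by rewrite opprD addrA subrr add0r.
Qed.

Lemma refl_mulmx_proj n (P : 'M[C]_n) : P *m P = P -> refl P *m P = - P.
Proof.
move=> Pidem; rewrite mulmxBl mul1mx -scalemxAl Pidem scaler_nat mulr2n.
by rewrite opprD addrA subrr add0r.
Qed.

Lemma refl_sqr n (P : 'M[C]_n) : P *m P = P -> refl P *m refl P = 1%:M.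
Proof.
move=> Pidem; rewrite mulmxBr mulmx1 -scalemxAr refl_mulmx_proj // scalerN.
by rewrite opprK subrK.
Qed.

(* If [R2 R1 x = -x], then [x = P1 x + P2 x] with [P1 x] and [P2 x] eigenvectors of
   [P1 - P2] for the eigenvalues [1] and [-1]. *)
Lemma refl_mulmx_eqN_eq0 n (P1 P2 : 'M[C]_n) (x : 'cV[C]_n) :
  orth_proj_mx P1 -> orth_proj_mx P2 -> opnorm (P1 - P2) < 1 ->
  refl P2 *m (refl P1 *m x) = - x -> x = 0.
Proof.
move=> [_ P1idem] [_ P2idem] P12_lt1 R21x.
set a := P1 *m x; set b := P2 *m x.
have x_ab : x = a + b.
  have := congr1 (mulmx (refl P2)) R21x; rewrite mulmxA refl_sqr // mul1mx mulmxN.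
  rewrite !mulmxBl !mul1mx -!scalemxAl -/a -/b opprB => R1x.
  have : x + x = 2%:R *: (a + b).
    by rewrite -{1}(subrK (2%:R *: a) x) R1x addrAC subrK addrC scalerDr.
  by rewrite -mulr2n -scaler_nat => /scalerI; apply; rewrite pnatr_eq0.
have P1b : P1 *m b = 0.
  have -> : b = x - a by rewrite {1}x_ab addrC addKr.
  by rewrite mulmxBr /a mulmxA P1idem subrr.
have P2a : P2 *m a = 0.
  have -> : a = x - b by rewrite {1}x_ab addrK.
  by rewrite mulmxBr /b mulmxA P2idem subrr.
have [a0|a_neq0] := eqVneq a 0; last first.
  move: P12_lt1; rewrite ltNge (@opnorm_ge1 _ _ _ _ a) //.
  by rewrite mulmxBl P2a subr0 /a mulmxA P1idem.
have [b0|b_neq0] := eqVneq b 0; first by rewrite x_ab a0 b0 addr0.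
move: P12_lt1; rewrite ltNge (@opnorm_ge1 _ _ _ _ b) //.
by rewrite mulmxBl P1b /b mulmxA P2idem sub0r vnormN.
Qed.

Lemma refl_mulmx_spectrum n (P1 P2 V : 'M[C]_n) (d : 'rV[C]_n) :
  orth_proj_mx P1 -> orth_proj_mx P2 -> opnorm (P1 - P2) < 1 -> unitary_mx V ->
  refl P2 *m refl P1 = V *m diag_mx d *m adj V ->
  forall i, conjc (d 0 i) * d 0 i = 1 /\ d 0 i != -1.
Proof.
move=> P1proj P2proj P12_lt1 V_unitary RRE i.
have [[P1adj P1idem] [P2adj P2idem]] := (P1proj, P2proj).
have VV : adj V *m V = 1%:M := mulmx1C V_unitary.
split.
  have RR_unitary : adj (refl P2 *m refl P1) *m (refl P2 *m refl P1) = 1%:M.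
    by rewrite adjM !refl_adj // -mulmxA (mulmxA (refl P2)) refl_sqr // mul1mx refl_sqr.
  have : adj (diag_mx d) *m diag_mx d = 1%:M.
    rewrite -[LHS](conj_mulmxK _ VV) -(conj_mulmx _ _ VV).
    have -> : V *m adj (diag_mx d) *m adj V = adj (V *m diag_mx d *m adj V).
      by rewrite adjM3 adjK.
    by rewrite -RRE RR_unitary mulmx1 VV.
  by move/matrixP/(_ i i); rewrite adj_diag_mx mul_diag_mx !mxE eqxx !mulr1n.
apply/eqP => di; set e := delta_mx i 0 : 'cV[C]_n.
have Ve_neq0 : V *m e != 0.
  apply: contra_neq (oner_neq0 C) => Ve0.
  have /matrixP/(_ i 0) : adj V *m (V *m e) = e by rewrite mulmxA VV mul1mx.
  by rewrite Ve0 mulmx0 !mxE !eqxx.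
have De : diag_mx d *m e = - e.
  apply/matrixP => k j; rewrite [j]ord1 mul_diag_mx !mxE.
  by case: eqVneq => [->|_]; rewrite ?di ?mulN1r // mulr0 oppr0.
move/eqP: Ve_neq0; apply; apply: (refl_mulmx_eqN_eq0 P1proj P2proj P12_lt1).
by rewrite mulmxA RRE !mulmxA -(mulmxA _ _ V) VV mulmx1 -mulmxA De mulmxN.
Qed.

Lemma psqrt_diag_mx_intertwine n (M : 'M[C]_n) (d w : 'rV[C]_n) :
  (forall i, conjc (d 0 i) * d 0 i = 1 /\ d 0 i != -1) ->
  (forall i, is_psqrt (d 0 i) (w 0 i)) ->
  M *m diag_mx d = adj (diag_mx d) *m M -> M *m diag_mx w = adj (diag_mx w) *m M.
Proof.
move=> d_spec dw /matrixP Md; apply/matrixP => i j.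
have := Md i j; rewrite !adj_diag_mx !mul_mx_diag !mul_diag_mx !mxE => Mdij.
have [->|Mij_neq0] := eqVneq (M i j) 0; first by rewrite mul0r mulr0.
have dji : d 0 j = conjc (d 0 i) by apply: (mulfI Mij_neq0); rewrite Mdij mulrC.
have [d_unit d_neqN1] := d_spec i.
by have := dw j; rewrite dji => /(psqrt_conjc d_unit d_neqN1 (dw i)) ->; rewrite mulrC.
Qed.

(* [U = V W V^*] and [R1 = V M V^*] with [M D M = D^*]; the intertwining passes
   from [D] to its principal square root [W]. *)
Lemma direct_rotation_adj n (P1 P2 U : 'M[C]_n) :
  direct_rotation P1 P2 U -> adj U = refl P1 *m U *m refl P1.
Proof.
case=> P1proj [P2proj [_ [P12_lt1 [V [d [w [V_unitary [RRE [dw ->]]]]]]]]].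
have [[P1adj P1idem] [P2adj P2idem]] := (P1proj, P2proj).
have VV : adj V *m V = 1%:M := mulmx1C V_unitary.
set D := diag_mx d; set W := diag_mx w; set M := adj V *m refl P1 *m V.
have R1E : refl P1 = V *m M *m adj V by rewrite (conj_mulmxK _ V_unitary).
have MM : M *m M = 1%:M by rewrite (conj_mulmx _ _ V_unitary) refl_sqr // mulmx1 VV.
have MDM : M *m D *m M = adj D.
  rewrite [D](_ : _ = adj V *m (refl P2 *m refl P1) *m V); last by rewrite RRE conj_mulmxK.
  rewrite !(conj_mulmx _ _ V_unitary) adjM3 adjK; congr (_ *m _ *m _).
  by rewrite adjM !refl_adj // -!mulmxA refl_sqr // mulmx1.
have MD : M *m D = adj D *m M by rewrite -MDM -mulmxA MM mulmx1.
have d_spec := refl_mulmx_spectrum P1proj P2proj P12_lt1 V_unitary RRE.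
have MWM : M *m W *m M = adj W.
  by rewrite (psqrt_diag_mx_intertwine d_spec dw MD) -mulmxA MM mulmx1.
by rewrite adjM3 adjK R1E !(conj_mulmx _ _ VV) MWM.
Qed.

Lemma direct_rotation_compress n (P1 P2 U : 'M[C]_n) :
  direct_rotation P1 P2 U -> P1 *m U *m P1 = P1 *m adj U *m P1.
Proof.
move=> rot; have [[_ P1idem] _] := rot.
rewrite (direct_rotation_adj rot) !mulmxA proj_mulmx_refl // -(mulmxA _ (refl P1) P1).
by rewrite refl_mulmx_proj // mulmxN !mulNmx opprK.
Qed.

End DirectRotation.

Section Compression.
Variables (R : realType) (N : nat) (Q D : 'M[R[i]]_N).
Local Notation U := (1%:M + D).
Hypotheses (Qproj : orth_proj_mx Q) (U_unitary : unitary_mx U).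
Hypothesis QUQ : Q *m U *m Q = Q *m adj U *m Q.

Let adjU : adj U = 1%:M + adj D.
Proof. by rewrite adjD adj_idmx. Qed.

Let QDQ_adj : Q *m adj D *m Q = Q *m D *m Q.
Proof. by move: QUQ; rewrite adjU !mulmxDr !mulmxDl => /addrI ->. Qed.

Lemma opnorm_compress_sub1 : opnorm (Q *m D *m Q) <= opnorm D ^+ 2 / 2.
Proof.
have DD : adj D + D = - (adj D *m D).
  have := mulmx1C U_unitary; rewrite adjU mulmxDl mul1mx mulmxDr mulmx1 -addrA.
  move/(canRL (addKr 1%:M)); rewrite addNr addrA [D + _]addrC => /eqP.
  by rewrite addr_eq0 => /eqP.
have two_QDQ : (2%:R : R[i]) *: (Q *m D *m Q) = - (Q *m (adj D *m D) *m Q).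
  by rewrite scaler_nat mulr2n -{1}QDQ_adj -mulmxDl -mulmxDr DD mulmxN mulNmx.
have -> : Q *m D *m Q = (2%:R^-1 : R[i]) *: - (Q *m (adj D *m D) *m Q).
  by rewrite -two_QDQ scalerA mulVf ?scale1r // pnatr_eq0.
have normc_half : normc (2%:R^-1 : R[i]) = 2^-1 by rewrite Normc.normcV normcMn Normc.normc1.
apply: le_trans (opnormZ_le _ _) _; rewrite opnormN normc_half mulrC.
apply: ler_wpM2r; first by rewrite invr_ge0 ler0n.
rewrite expr2; apply: le_trans (opnorm_mulmx_proj_le _ Qproj) _.
apply: le_trans (opnorm_proj_mulmx_le _ Qproj) _; apply: le_trans (opnormM _ _) _.
by apply: ler_wpM2r; [exact: opnorm_ge0 | exact: opnorm_adj_le].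
Qed.

Lemma opnorm_compress_le (H : 'M[R[i]]_N) : herm_mx H ->
  opnorm (Q *m H *m Q) <= opnorm (Q *m adj U *m H *m U *m Q)
    + 2 * opnorm D * opnorm (Q *m H *m (1%:M - Q)) + 2 * opnorm D ^+ 2 * opnorm H.
Proof.
move=> Hherm; have [Qadj Qidem] := Qproj.
have [Qcadj _] := orth_proj_mx_compl Qproj.
set e := opnorm D; set o := opnorm (Q *m H *m (1%:M - Q)); set h := opnorm H.
have QDQ_le : opnorm (Q *m D *m Q) <= e ^+ 2 / 2 := opnorm_compress_sub1.
have QadjD_le : opnorm (Q *m adj D) <= e.
  exact: le_trans (opnorm_proj_mulmx_le _ Qproj) (opnorm_adj_le D).
have QHQ_le : opnorm (Q *m H *m Q) <= h.
  exact: le_trans (opnorm_mulmx_proj_le _ Qproj) (opnorm_proj_mulmx_le _ Qproj).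
have QcHQ_le : opnorm ((1%:M - Q) *m H *m Q) <= o.
  by rewrite -[X in opnorm X]adjK adjM3 Qcadj Hherm Qadj opnorm_adj_le.
have Y1_le : opnorm (Q *m H *m D *m Q) <= h * (e ^+ 2 / 2) + o * e.
  have -> : Q *m H *m D *m Q = Q *m H *m Q *m (Q *m D *m Q) + Q *m H *m (1%:M - Q) *m (D *m Q).
    by rewrite mulmxBr mulmx1 mulmxBl !mulmxA -(mulmxA _ Q Q) Qidem addrC subrK.
  apply: le_trans (opnormD _ _) (lerD (opnormM_le QHQ_le QDQ_le) _).
  exact: opnormM_le (lexx _) (opnorm_mulmx_proj_le _ Qproj).
have Y2_le : opnorm (Q *m adj D *m H *m Q) <= e ^+ 2 / 2 * h + e * o.
  have -> : Q *m adj D *m H *m Q =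
      Q *m D *m Q *m (Q *m H *m Q) + Q *m adj D *m ((1%:M - Q) *m H *m Q).
    by rewrite -QDQ_adj !mulmxBl !mul1mx mulmxBr !mulmxA -(mulmxA _ Q Q) Qidem addrC subrK.
  apply: le_trans (opnormD _ _) (lerD (opnormM_le QDQ_le QHQ_le) _).
  exact: opnormM_le QadjD_le QcHQ_le.
have Y3_le : opnorm (Q *m adj D *m H *m D *m Q) <= e * h * e.
  apply: le_trans (opnorm_mulmx_proj_le _ Qproj) _.
  exact: opnormM_le (opnormM_le QadjD_le (lexx _)) (lexx _).
have -> : Q *m adj U *m H *m U *m Q = Q *m H *m Q + Q *m adj D *m H *m Q
    + (Q *m H *m D *m Q + Q *m adj D *m H *m D *m Q).
  by rewrite adjU !mulmxDr !mulmxDl !mulmx1.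
set Y1 := Q *m H *m D *m Q in Y1_le *; set Y2 := Q *m adj D *m H *m Q in Y2_le *.
set Y3 := Q *m adj D *m H *m D *m Q in Y3_le *.
set X := Q *m H *m Q + Y2 + (Y1 + Y3).
have XE : X - (Y1 + Y3) - Y2 = Q *m H *m Q by rewrite !addrK.
rewrite -XE; apply: le_trans (opnormB _ _) _.
apply: le_trans (lerD (le_trans (opnormB _ _) (lerD (lexx _) (opnormD Y1 Y3))) Y2_le) _.
rewrite -[leLHS]addrA -[leRHS]addrA lerD2l.
(* [lra] is run on abstracted reals: comparing [opnorm] atoms by conversion is very slow. *)
move: (opnorm Y1) (opnorm Y3) Y1_le Y3_le => y1 y3 y1_le y3_le; clear -y1_le y3_le.
lra.
Qed.

End Compression.

Lemma opnorm_gadget_compress_le (R : realType) n m (H : 'M[R[i]]_n) (H' : 'M[R[i]]_(n * m))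
    (P : 'M[R[i]]_m) (U : 'M[R[i]]_(n * m)) (eps : R) :
  let Q := (1%:M : 'M[R[i]]_n) *t P in
  orth_proj_mx P -> unitary_mx U ->
  opnorm (U *m Q *m adj U *m H' *m (U *m Q *m adj U) - U *m (H *t P) *m adj U) <= eps ->
  opnorm (Q *m adj U *m H' *m U *m Q) <= eps + opnorm H.
Proof.
move=> Q Pproj U_unitary gadget; have UU := mulmx1C U_unitary.
have adjU_unitary : unitary_mx (adj U) by rewrite /unitary_mx adjK.
have -> : Q *m adj U *m H' *m U *m Q =
    adj U *m (U *m Q *m adj U *m H' *m (U *m Q *m adj U)) *m adj (adj U).
  by rewrite adjK !mulmxA UU mul1mx -(mulmxA _ (adj U) U) UU mulmx1.
apply: le_trans (opnorm_unitary_conj_le _ adjU_unitary) _.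
rewrite -[X in opnorm X](subrK (U *m (H *t P) *m adj U)).
apply: le_trans (opnormD _ _) (lerD gadget _).
exact: le_trans (opnorm_unitary_conj_le _ U_unitary) (opnorm_tensmx_proj_le _ Pproj).
Qed.

Theorem lemma14 (R : realType) :
  exists c : R, 0 < c /\
  forall (n m : nat) (H : 'M[R[i]]_n) (H' : 'M[R[i]]_(n * m))
         (P : 'M[R[i]]_m) (U : 'M[R[i]]_(n * m)) (eta eps J' JO' : R),
    herm_mx H -> herm_mx H' ->
    (* (H', A) is an (eta, eps)-gadget for H, witnessed by P and U *)
    orth_proj_mx P -> P != 0 ->
    unitary_mx U ->
    opnorm (U - 1%:M) <= eta ->
    opnorm (U *m (1%:M *t P) *m adj U *m H' *m (U *m (1%:M *t P) *m adj U)
            - U *m (H *t P) *m adj U) <= eps ->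
    (* U is the direct rotation between I (x) P and P' = U (I (x) P) U^dagger *)
    direct_rotation (1%:M *t P) (U *m (1%:M *t P) *m adj U) U ->
    opnorm H' <= J' ->
    opnorm ((1%:M *t P) *m H' *m (1%:M *t (1%:M - P))) <= JO' ->
    opnorm ((1%:M *t P) *m H' *m (1%:M *t P))
      <= opnorm H + c * (eps + eta * JO' + eta ^+ 2 * J').
Proof.
exists 2; split=> // n m H H' P U eta eps J' JO' _ H'herm Pproj _ U_unitary Ueta gadget.
move=> rot H'_le QH'Qc_le; rewrite tensmxBr tensmx11 in QH'Qc_le.
have rotated_le := opnorm_gadget_compress_le Pproj U_unitary gadget.
have Qproj : orth_proj_mx ((1%:M : 'M[R[i]]_n) *t P) := orth_proj_mx_tens1 n Pproj.
have QUQ := direct_rotation_compress rot.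
set Q := 1%:M *t P in rotated_le Qproj QUQ QH'Qc_le *.
have [D UD] : exists D, U = 1%:M + D by exists (U - 1%:M); rewrite addrC subrK.
subst U; rewrite addrC addKr in Ueta.
apply: le_trans (opnorm_compress_le Qproj U_unitary QUQ H'herm) _.
have eps_ge0 : 0 <= eps := le_trans (opnorm_ge0 _) gadget.
have e_ge0 := opnorm_ge0 D; have o_ge0 := opnorm_ge0 (Q *m H' *m (1%:M - Q)).
have eo_le : 2 * opnorm D * opnorm (Q *m H' *m (1%:M - Q)) <= 2 * (eta * JO').
  by rewrite -mulrA ler_pM2l // ler_pM.
have e2h_le : 2 * opnorm D ^+ 2 * opnorm H' <= 2 * (eta ^+ 2 * J').
  rewrite -mulrA ler_pM2l // ler_pM ?sqr_ge0 ?opnorm_ge0 //.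
  by rewrite ler_pXn2r ?nnegrE // (le_trans e_ge0).
move: rotated_le eo_le e2h_le eps_ge0.
move: (opnorm (Q *m _ *m H' *m _ *m Q)) (2 * opnorm D * _) (2 * opnorm D ^+ 2 * _) => t eo e2h.
clear; lra.
Qed.
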